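(* Let $p,q\in\mathbb{C}$, let $K\in\mathbb{C}^{N\times N}$ be a constant matrix and $c=(c_1,\dots,c_N)$ a constant row vector. Let $r(n,m)=(\rho_1(n,m),\dots,\rho_N(n,m))^T$ and $M(n,m)\in\mathbb{C}^{N\times N}$ be functions on $\mathbb{Z}^2$ such that, for all $(n,m)$, $$(pI-K)\tilde r=(pI+K)r,\qquad (qI-K)\hat r=(qI+K)r,\qquad MK+KM=r\,c,$$ and $I+M(n,m)$ is invertible for all $(n,m)$. Let $a,b\in\mathbb{C}$, and assume $sI\pm K$ is invertible for $s\in\{0,p,q,a,b\}$ and the eigenvalues $k_1,\dots,k_N$ of $K$ (with multiplicity) satisfy $k_i+k_j\ne0$ for all $i,j$. For $i,j\in\mathbb{Z}$ define $S^{(i,j)}=c\,K^j(I+M)^{-1}K^i r$. Then for all $i,j\in\mathbb{Z}$: $$p\tilde S^{(i,j)}-\tilde S^{(i,j+1)}=pS^{(i,j)}+S^{(i+1,j)}-\tilde S^{(i,0)}S^{(0,j)},$$ $$pS^{(i,j)}+S^{(i,j+1)}=p\tilde S^{(i,j)}-\tilde S^{(i+1,j)}+S^{(i,0)}\tilde S^{(0,j)},$$ $$q\hat S^{(i,j)}-\hat S^{(i,j+1)}=qS^{(i,j)}+S^{(i+1,j)}-\hat S^{(i,0)}S^{(0,j)},$$ $$qS^{(i,j)}+S^{(i,j+1)}=q\hat S^{(i,j)}-\hat S^{(i+1,j)}+S^{(i,0)}\hat S^{(0,j)}.$$ Moreover, define $S(a,b)=c\,(bI+K)^{-1}(I+M)^{-1}(aI+K)^{-1}r$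 and $V(a)=1-c\,(I+M)^{-1}(aI+K)^{-1}r$ (and similarly $V(b)$, $S(b,a)$). If $S^{(i,j)}=S^{(j,i)}$ for all $i,j$, then $S(a,b)=S(b,a)$, $V(a)=1-c\,(aI+K)^{-1}(I+M)^{-1}r$, and $$1-(p+b)\tilde S(a,b)+(p-a)S(a,b)=\tilde V(a)V(b),\qquad 1-(q+b)\hat S(a,b)+(q-a)S(a,b)=\hat V(a)V(b),$$ $$1-(p+a)\tilde S(a,b)+(p-b)S(a,b)=\tilde V(b)V(a),\qquad 1-(q+a)\hat S(a,b)+(q-b)S(a,b)=\hat V(b)V(a).$$
   Context: For a function $f$ on $\mathbb{Z}^2$, $\tilde f(n,m)=f(n+1,m)$ and $\hat f(n,m)=f(n,m+1)$. $I$ is the $N\times N$ identity matrix. The symmetry $S(a,b)=S(b,a)$ and the identities for $S(a,b),V$ are to be understood for all $a,b$ with $aI+K$, $bI+K$ invertible (the symmetry argument uses the formal expansion $S(a,b)=\sum_{i,j\ge0}(-1)^{i+j}a^{-i-1}b^{-j-1}S^{(i,j)}$). *)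

(* The complex field C is generalized to an arbitrary
   numClosedFieldType (algebraically closed field of char 0 with conjugation;
   e.g. algC, and C itself). *)
From HB Require Import structures.
From mathcomp Require Import all_boot all_order all_algebra.
Set Implicit Arguments. Unset Strict Implicit. Unset Printing Implicit Defensive.
Import Order.TTheory GRing.Theory Num.Theory.
Local Open Scope ring_scope.

Section Defs.
Variables (C : numClosedFieldType) (N : nat).

(* natural power of a square matrix, via mulmx (works for every N, incl. 0) *)
Definition mxpown (A : 'M[C]_N) (k : nat) : 'M[C]_N := iter k (mulmx A) 1%:M.

Definition mxpowz (A : 'M[C]_N) (j : int) : 'M[C]_N :=
  match j with
  | Posz k => mxpown A k
  | Negz k => mxpown (invmx A) k.+1
  end.

Definition sc (x : 'M[C]_1) : C := x ord0 ord0.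

Definition Sij (K : 'M[C]_N) (c : 'rV[C]_N) (r : int -> int -> 'cV[C]_N)
  (M : int -> int -> 'M[C]_N) (i j : int) (n m : int) : C :=
  sc (c *m mxpowz K j *m invmx (1%:M + M n m) *m mxpowz K i *m r n m).

Definition Sab (K : 'M[C]_N) (c : 'rV[C]_N) (r : int -> int -> 'cV[C]_N)
  (M : int -> int -> 'M[C]_N) (a b : C) (n m : int) : C :=
  sc (c *m invmx (b%:M + K) *m invmx (1%:M + M n m) *m invmx (a%:M + K) *m r n m).

Definition Va (K : 'M[C]_N) (c : 'rV[C]_N) (r : int -> int -> 'cV[C]_N)
  (M : int -> int -> 'M[C]_N) (a : C) (n m : int) : C :=
  1 - sc (c *m invmx (1%:M + M n m) *m invmx (a%:M + K) *m r n m).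

End Defs.

From HB Require Import structures.
From mathcomp Require Import all_boot all_order all_algebra.
From mathcomp Require Import ring zify.
Import Order.TTheory GRing.Theory Num.Theory.
Set Implicit Arguments. Unset Strict Implicit. Unset Printing Implicit Defensive.
Local Open Scope ring_scope.

(* 1. Sylvester: when no two eigenvalues of K sum to zero, X K + K X = 0
      forces X = 0 (Cayley-Hamilton applied to f(-K) X = X f(K) with f the
      characteristic polynomial of K).
   2. Lattice shifts: writing (r', M') for the data at a neighbouring point,
      the dispersion relation and uniqueness in (1) give the shift relations
      for M, hence for the resolvent U = (I + M)^-1; sandwiching them between
      a row vector and a matrix commuting with K yields one scalar identity
      (form_shift_minus / form_shift_plus) from which both the equations for
      S^(i,j) (take the sandwich K^j, K^i) and those for S(a, b), V (take
      the resolvents (b + K)^-1, (a + K)^-1) follow.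
   3. Symmetry: inverses of a + K are polynomials in K (Cayley-Hamilton), so
      symmetry of S^(i,j) on nonnegative indices gives S(a,b) = S(b,a) and
      the alternative form of V(a). *)

Section Sylvester.
Variable C : numClosedFieldType.

Lemma eigenvalueNunitmx n (K : 'M[C]_n) w :
  eigenvalue K w = ((K - w%:M) \notin unitmx).
Proof. by rewrite /eigenvalue /eigenspace kermx_eq0 row_free_unit. Qed.

Lemma anticomm_horner_mx n (K X : 'M[C]_n.+1) : X *m K = - (K *m X) ->
  forall f, X *m horner_mx K f = horner_mx (- K) f *m X.
Proof.
move=> XK; elim/poly_ind => [|f a IHf]; first by rewrite !rmorph0 mulmx0 mul0mx.
rewrite !rmorphD !rmorphM /= !horner_mx_X !horner_mx_C -!mulmxE.
rewrite mulmxDr mulmxDl mulmxA IHf -(mulmxA _ X K) XK scalar_mxC.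
by rewrite mulmxN mulmxA mulmxN mulNmx.
Qed.

Lemma char_poly_oppmx_unit n (K : 'M[C]_n.+1) :
  (forall x y, eigenvalue K x -> eigenvalue K y -> x + y != 0) ->
  horner_mx (- K) (char_poly K) \in unitmx.
Proof.
move=> Heig; have [s Hs] := closed_field_poly_normal (char_poly K).
rewrite Hs (monicP (char_poly_monic K)) scale1r rmorph_prod /= big_seq.
apply: (big_ind (fun A => A \in unitmx)); first exact: unitmx1.
  by move=> A B uA uB; rewrite -mulmxE unitmx_mul uA uB.
move=> z zs; rewrite rmorphB /= horner_mx_X horner_mx_C.
have ev_z : eigenvalue K z.
  by rewrite eigenvalue_root_char Hs (monicP (char_poly_monic K)) scale1r root_prod_XsubC.
have : ~~ eigenvalue K (- z).
  by apply/negP => /(Heig _ _ ev_z); rewrite subrr eqxx.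
rewrite eigenvalueNunitmx negbK -(unitmxZ _ (unitrN1 C)) scaleN1r.
by rewrite opprB raddfN /= addrC.
Qed.

Lemma anticomm_eq0 N (K X : 'M[C]_N) :
  (forall x y, eigenvalue K x -> eigenvalue K y -> x + y != 0) ->
  X *m K + K *m X = 0 -> X = 0.
Proof.
case: N K X => [|n] K X Heig XK0; first by rewrite [X]thinmx0.
have XK : X *m K = - (K *m X) by apply/eqP; rewrite -addr_eq0 XK0.
have := anticomm_horner_mx XK (char_poly K).
rewrite Cayley_Hamilton mulmx0 => /esym XcharK.
by rewrite -(mulKmx (char_poly_oppmx_unit Heig) X) XcharK mulmx0.
Qed.

End Sylvester.

Section IntegerPowers.
Variables (C : numClosedFieldType) (N : nat) (K : 'M[C]_N).
Hypothesis unitK : K \in unitmx.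

Lemma mxpownE (A : 'M[C]_N) k : mxpown A k = A ^+ k.
Proof. by elim: k => [|k IHk]; rewrite ?expr0 // exprS -IHk. Qed.

Lemma mxpowz_comm i : mxpowz K i *m K = K *m mxpowz K i.
Proof.
have KV : GRing.comm K (invmx K) by rewrite /GRing.comm -!mulmxE mulVmx ?mulmxV.
case: i => k; rewrite /mxpowz mxpownE !mulmxE.
  exact/esym/commrX.
exact/esym/(commrX _ KV).
Qed.

Lemma mxpowzS i : mxpowz K (i + 1) = mxpowz K i *m K.
Proof.
case: i => [k|[|k]].
- by rewrite -PoszD addn1 /mxpowz !mxpownE exprSr.
- by rewrite /mxpowz mxpownE expr1 mulVmx.
have -> : Negz k.+1 + 1 = Negz k by rewrite !NegzE; lia.
by rewrite /mxpowz !mxpownE [in RHS]exprSr mulmxE -mulrA -mulmxE mulVmx // mulmx1.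
Qed.

End IntegerPowers.

Section PolynomialsInK.
Variables (C : numClosedFieldType) (n : nat).
Implicit Types (A K T : 'M[C]_n.+1) (f g h : {poly C}).

Lemma horner_mx_comp A f h : horner_mx (horner_mx A h) f = horner_mx A (f \Po h).
Proof.
elim/poly_ind: f => [|f x IHf]; first by rewrite comp_poly0 !rmorph0.
by rewrite comp_poly_MXaddC !rmorphD !rmorphM /= !horner_mx_X !horner_mx_C IHf.
Qed.

(* Cayley-Hamilton: the inverse of an invertible T is a polynomial in T. *)
Lemma invmx_horner T : T \in unitmx -> exists g, invmx T = horner_mx T g.
Proof.
move=> unitT; set f := char_poly T.
have [q Dq] : exists q, f = q * 'X + (f`_0)%:P.
  elim/poly_ind: f => [|q x _]; first by exists 0; rewrite mul0r coef0 add0r.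
  by exists q; rewrite coefD coefMX coefC /= add0r.
have f0_unit : f`_0 \is a GRing.unit.
  by rewrite char_poly_det unitrM unitrX ?unitrN1 // -unitmxE.
have qT : horner_mx T q *m T = (- f`_0)%:M.
  have := Cayley_Hamilton T; rewrite -/f {1}Dq rmorphD rmorphM /=.
  by rewrite horner_mx_X horner_mx_C -mulmxE => /eqP; rewrite addr_eq0 raddfN => /eqP.
have -> : invmx T = (- f`_0)^-1 *: horner_mx T q.
  rewrite -[horner_mx T q](mulmxK unitT) qT mul_scalar_mx scalerA.
  by rewrite mulVr ?unitrN // scale1r.
by exists ((- f`_0)^-1 *: q); rewrite linearZ.
Qed.

Lemma resolvent_horner K s :
  (s%:M + K) \in unitmx -> exists g, invmx (s%:M + K) = horner_mx K g.
Proof.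
case/invmx_horner => g ->; exists (g \Po ('X + s%:P)).
by rewrite -horner_mx_comp rmorphD /= horner_mx_X horner_mx_C addrC.
Qed.

Lemma horner_mx_sum K g : horner_mx K g = \sum_(i < size g) g`_i *: K ^+ i.
Proof.
rewrite -{1}[g]coefK poly_def rmorph_sum; apply: eq_bigr => i _.
by rewrite -mul_polyC rmorphM /= horner_mx_C rmorphXn /= horner_mx_X -mulmxE
   mul_scalar_mx.
Qed.

Section Form.
Variables (K U : 'M[C]_n.+1) (c : 'rV[C]_n.+1) (r : 'cV[C]_n.+1).

Definition form (X Y : 'M[C]_n.+1) : C := sc (c *m X *m U *m Y *m r).

Lemma form_suml k (a : 'I_k -> C) (X : 'I_k -> 'M[C]_n.+1) Y :
  form (\sum_(i < k) a i *: X i) Y = \sum_(i < k) a i * form (X i) Y.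
Proof.
rewrite /form /sc mulmx_sumr !mulmx_suml summxE; apply: eq_bigr => i _.
by rewrite -scalemxAr -!scalemxAl mxE.
Qed.

Lemma form_sumr k (b : 'I_k -> C) X (Y : 'I_k -> 'M[C]_n.+1) :
  form X (\sum_(j < k) b j *: Y j) = \sum_(j < k) b j * form X (Y j).
Proof.
rewrite /form /sc mulmx_sumr !mulmx_suml summxE; apply: eq_bigr => j _.
by rewrite -scalemxAr -!scalemxAl mxE.
Qed.

Lemma form_sym_horner :
  (forall i j : nat, form (K ^+ j) (K ^+ i) = form (K ^+ i) (K ^+ j)) ->
  forall f g, form (horner_mx K f) (horner_mx K g) = form (horner_mx K g) (horner_mx K f).
Proof.
move=> symK f g; rewrite !horner_mx_sum !form_suml.
under eq_bigr do rewrite form_sumr mulr_sumr.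
under [RHS]eq_bigr do rewrite form_sumr mulr_sumr.
rewrite exchange_big; apply: eq_bigr => j _; apply: eq_bigr => i _.
by rewrite symK mulrCA.
Qed.
End Form.
End PolynomialsInK.

Section ResolventSymmetry.
Variable C : numClosedFieldType.

Lemma resolvent_form_sym N (K U : 'M[C]_N) (c : 'rV_N) (r : 'cV_N) :
  (forall i j : nat, sc (c *m K ^+ j *m U *m K ^+ i *m r)
                   = sc (c *m K ^+ i *m U *m K ^+ j *m r)) ->
  forall s t, (s%:M + K) \in unitmx -> (t%:M + K) \in unitmx ->
  sc (c *m invmx (t%:M + K) *m U *m invmx (s%:M + K) *m r)
  = sc (c *m invmx (s%:M + K) *m U *m invmx (t%:M + K) *m r).
Proof.
case: N K U c r => [|n] K U c r symK s t; first by rewrite [c]thinmx0 !mul0mx.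
by move=> /resolvent_horner[f ->] /resolvent_horner[g ->]; apply: form_sym_horner.
Qed.

Lemma resolvent_form_sym1 N (K U : 'M[C]_N) (c : 'rV_N) (r : 'cV_N) :
  (forall i j : nat, sc (c *m K ^+ j *m U *m K ^+ i *m r)
                   = sc (c *m K ^+ i *m U *m K ^+ j *m r)) ->
  forall s, (s%:M + K) \in unitmx ->
  sc (c *m U *m invmx (s%:M + K) *m r) = sc (c *m invmx (s%:M + K) *m U *m r).
Proof.
case: N K U c r => [|n] K U c r symK s; first by rewrite [c]thinmx0 !mul0mx.
move=> /resolvent_horner[f ->].
by have := form_sym_horner symK 1 f; rewrite /form rmorph1 !mulmx1.
Qed.

End ResolventSymmetry.

Section ScalarEntry.
Variable C : numClosedFieldType.
Implicit Types x y : 'M[C]_1.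

Lemma scB x y : sc (x - y) = sc x - sc y. Proof. by rewrite /sc !mxE. Qed.
Lemma scD x y : sc (x + y) = sc x + sc y. Proof. by rewrite /sc !mxE. Qed.
Lemma scZ (a : C) x : sc (a *: x) = a * sc x. Proof. by rewrite /sc mxE. Qed.
Lemma scM x y : sc (x *m y) = sc x * sc y. Proof. by rewrite /sc mxE big_ord1. Qed.

End ScalarEntry.

Section ScalarShift.
Variables (C : numClosedFieldType) (N : nat) (K : 'M[C]_N).

Lemma scalar_sub_split (p b : C) : p%:M - K = (p + b)%:M - (b%:M + K).
Proof. by rewrite raddfD /= opprD addrA addrK. Qed.

Lemma scalar_add_split (p a : C) : p%:M + K = (p - a)%:M + (a%:M + K).
Proof. by rewrite raddfB /= addrA subrK. Qed.

End ScalarShift.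

Ltac mx_expand :=
  repeat progress rewrite ?mulmxBl ?mulmxBr ?mulmxDl ?mulmxDr ?mulmxN ?mulNmx
    ?mul_scalar_mx ?mul_mx_scalar ?mulmx1 ?mul1mx -?scalemxAl -?scalemxAr ?mulmxA.

Ltac mx_distribute := mx_expand; apply/matrixP => ? ?; rewrite !mxE; ring.

Ltac sc_expand := mx_expand; rewrite ?(scB, scD, scZ).

Section DiscreteShift.
Variables (C : numClosedFieldType) (N : nat) (K : 'M[C]_N) (c : 'rV[C]_N).
(* (r, M) is the data at a lattice point and (r', M') at its neighbour in
   the direction with lattice parameter p. *)
Variables (r r' : 'cV[C]_N) (M M' : 'M[C]_N) (p : C).
Hypothesis anticomm_inj : forall X : 'M[C]_N, X *m K + K *m X = 0 -> X = 0.
Hypothesis Hr : (p%:M - K) *m r' = (p%:M + K) *m r.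
Hypothesis HM : M *m K + K *m M = r *m c.
Hypothesis HM' : M' *m K + K *m M' = r' *m c.
Hypothesis unitU : (1%:M + M) \in unitmx.
Hypothesis unitU' : (1%:M + M') \in unitmx.
Local Notation U := (invmx (1%:M + M)).
Local Notation U' := (invmx (1%:M + M')).

(* Shift relations for M, by uniqueness for the Sylvester equation: in each
   case both sides solve X K + K X = s c K + K s c, with s = r resp. s = r'. *)
Lemma shiftM_minus : (p%:M - K) *m M' - M *m (p%:M - K) = r *m c.
Proof.
apply/eqP; rewrite -subr_eq0; apply/eqP/anticomm_inj.
transitivity ((p%:M - K) *m (M' *m K + K *m M') - (M *m K + K *m M) *m (p%:M - K)
   - (r *m c *m K + K *m (r *m c))); first by mx_distribute.
by rewrite HM HM' mulmxA Hr; mx_distribute.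
Qed.

Lemma shiftM_plus : M' *m (p%:M + K) - (p%:M + K) *m M = r' *m c.
Proof.
apply/eqP; rewrite -subr_eq0; apply/eqP/anticomm_inj.
transitivity ((M' *m K + K *m M') *m (p%:M + K) - (p%:M + K) *m (M *m K + K *m M)
   - (r' *m c *m K + K *m (r' *m c))); first by mx_distribute.
by rewrite HM HM' mulmxA -Hr; mx_distribute.
Qed.

Lemma resolvent_minus : (p%:M - K) *m U' = U *m (p%:M - K) - U *m r *m c *m U'.
Proof.
have -> : U *m r *m c *m U'
        = U *m ((p%:M - K) *m (1%:M + M') - (1%:M + M) *m (p%:M - K)) *m U'.
  by rewrite -[U *m r *m c]mulmxA -shiftM_minus; congr (_ *m _ *m _); mx_distribute.
rewrite (mulmxBr U (_ *m (1%:M + M'))) (mulmxBl (U *m _)) -!mulmxA.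
by rewrite (mulmxV unitU') mulmx1 !mulmxA (mulVmx unitU) mul1mx opprB subrKC.
Qed.

Lemma resolvent_plus : (p%:M + K) *m U = U' *m (p%:M + K) + U' *m r' *m c *m U.
Proof.
have -> : U' *m r' *m c *m U
        = U' *m ((1%:M + M') *m (p%:M + K) - (p%:M + K) *m (1%:M + M)) *m U.
  by rewrite -[U' *m r' *m c]mulmxA -shiftM_plus; congr (_ *m _ *m _); mx_distribute.
rewrite (mulmxBr U' ((1%:M + M') *m _)) (mulmxBl (U' *m _)) -!mulmxA.
by rewrite (mulmxV unitU) mulmx1 !mulmxA (mulVmx unitU') mul1mx subrKC.
Qed.

(* The resolvent relations sandwiched between a row vector x and a matrix I
   commuting with K; the dispersion relation moves (p - K) onto r. *)
Lemma form_shift_minus (x : 'rV[C]_N) (I : 'M[C]_N) : I *m K = K *m I ->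
  sc (x *m (p%:M - K) *m U' *m I *m r')
  = sc (x *m U *m I *m (p%:M + K) *m r) - sc (x *m U *m r) * sc (c *m U' *m I *m r').
Proof.
move=> IK; have IpK : (p%:M - K) *m I = I *m (p%:M - K).
  by rewrite mulmxBl mulmxBr IK scalar_mxC.
rewrite -scM -scB; congr sc.
rewrite -(mulmxA x) resolvent_minus mulmxBr !mulmxBl !mulmxA; congr (_ - _).
by rewrite -!mulmxA (mulmxA (p%:M - K)) IpK -mulmxA Hr.
Qed.

Lemma form_shift_plus (x : 'rV[C]_N) (I : 'M[C]_N) : I *m K = K *m I ->
  sc (x *m (p%:M + K) *m U *m I *m r)
  = sc (x *m U' *m I *m (p%:M - K) *m r') + sc (x *m U' *m r') * sc (c *m U *m I *m r).
Proof.
move=> IK; have IpK : (p%:M + K) *m I = I *m (p%:M + K).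
  by rewrite mulmxDl mulmxDr IK scalar_mxC.
rewrite -scM -scD; congr sc.
rewrite -(mulmxA x) resolvent_plus mulmxDr !mulmxDl !mulmxA; congr (_ + _).
by rewrite -!mulmxA (mulmxA (p%:M + K)) IpK -mulmxA Hr.
Qed.

Section Resolvents.
Variables a b : C.
Hypotheses (unitA : (a%:M + K) \in unitmx) (unitB : (b%:M + K) \in unitmx).
Local Notation A := (invmx (a%:M + K)).
Local Notation B := (invmx (b%:M + K)).

Lemma V_shift : sc (c *m U *m B *m r) = sc (c *m B *m U *m r) ->
  1 - (p + b) * sc (c *m B *m U' *m A *m r') + (p - a) * sc (c *m B *m U *m A *m r)
  = (1 - sc (c *m U' *m A *m r')) * (1 - sc (c *m U *m B *m r)).
Proof.
move=> symB.
have AK : A *m K = K *m A.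
  have TK : (a%:M + K) *m K = K *m (a%:M + K) by rewrite mulmxDl mulmxDr scalar_mxC.
  rewrite -[A *m K]mulmx1 -(mulmxV unitA) !mulmxA -(mulmxA A K) -TK mulmxA.
  by rewrite mulVmx // mul1mx.
have eB : c *m B *m (p%:M - K) = (p + b) *: (c *m B) - c.
  rewrite (scalar_sub_split K p b) mulmxBr mul_mx_scalar -mulmxA.
  by rewrite (mulVmx unitB) mulmx1.
have eA : sc (c *m B *m U *m A *m (p%:M + K) *m r)
          = (p - a) * sc (c *m B *m U *m A *m r) + sc (c *m B *m U *m r).
  rewrite (scalar_add_split K p a) mulmxDr mulmxDl mul_mx_scalar -scalemxAl scD scZ.
  by rewrite -(mulmxA _ A (a%:M + K)) (mulVmx unitA) mulmx1.
have := form_shift_minus (c *m B) AK.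
rewrite eB eA mulmxBl !mulmxBl -scalemxAl -!scalemxAl scB scZ symB.
by move/(canRL (subrK _)) ->; ring.
Qed.
End Resolvents.

Hypothesis unitK : K \in unitmx.
Local Notation S i j := (sc (c *m mxpowz K j *m U *m mxpowz K i *m r)).
Local Notation S' i j := (sc (c *m mxpowz K j *m U' *m mxpowz K i *m r')).

Lemma S_shift_minus i j :
  p * S' i j - S' i (j + 1) = p * S i j + S (i + 1) j - S' i 0 * S 0 j.
Proof.
have := form_shift_minus (c *m mxpowz K j) (mxpowz_comm unitK i).
by rewrite !mxpowzS // mulmx1; sc_expand => ->; ring.
Qed.

Lemma S_shift_plus i j :
  p * S i j + S i (j + 1) = p * S' i j - S' (i + 1) j + S i 0 * S' 0 j.
Proof.
have := form_shift_plus (c *m mxpowz K j) (mxpowz_comm unitK i).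
by rewrite !mxpowzS // mulmx1; sc_expand => ->; ring.
Qed.

End DiscreteShift.

Theorem theorem1 (C : numClosedFieldType) (N : nat) (p q a b : C)
  (K : 'M[C]_N) (c : 'rV[C]_N)
  (r : int -> int -> 'cV[C]_N) (M : int -> int -> 'M[C]_N)
  (Hr1 : forall n m : int, (p%:M - K) *m r (n + 1) m = (p%:M + K) *m r n m)
  (Hr2 : forall n m : int, (q%:M - K) *m r n (m + 1) = (q%:M + K) *m r n m)
  (HM : forall n m : int, M n m *m K + K *m M n m = r n m *m c)
  (HIM : forall n m : int, (1%:M + M n m) \in unitmx)
  (Hinv : forall s : C, s \in [:: 0; p; q; a; b] ->
            ((s%:M + K) \in unitmx) /\ ((s%:M - K) \in unitmx))
  (Heig : forall x y : C, eigenvalue K x -> eigenvalue K y -> x + y != 0) :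
  let S := Sij K c r M in
  let Sab' := Sab K c r M in
  let V := Va K c r M in
  (forall (i j n m : int),
     p * S i j (n + 1) m - S i (j + 1) (n + 1) m
       = p * S i j n m + S (i + 1) j n m - S i 0 (n + 1) m * S 0 j n m
   /\ p * S i j n m + S i (j + 1) n m
       = p * S i j (n + 1) m - S (i + 1) j (n + 1) m + S i 0 n m * S 0 j (n + 1) m
   /\ q * S i j n (m + 1) - S i (j + 1) n (m + 1)
       = q * S i j n m + S (i + 1) j n m - S i 0 n (m + 1) * S 0 j n m
   /\ q * S i j n m + S i (j + 1) n m
       = q * S i j n (m + 1) - S (i + 1) j n (m + 1) + S i 0 n m * S 0 j n (m + 1))
  /\
  ((forall (i j n m : int), S i j n m = S j i n m) ->
   forall n m : int,
     Sab' a b n m = Sab' b a n m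
   /\ V a n m = 1 - sc (c *m invmx (a%:M + K) *m invmx (1%:M + M n m) *m r n m)
   /\ 1 - (p + b) * Sab' a b (n + 1) m + (p - a) * Sab' a b n m
        = V a (n + 1) m * V b n m
   /\ 1 - (q + b) * Sab' a b n (m + 1) + (q - a) * Sab' a b n m
        = V a n (m + 1) * V b n m
   /\ 1 - (p + a) * Sab' a b (n + 1) m + (p - b) * Sab' a b n m
        = V b (n + 1) m * V a n m
   /\ 1 - (q + a) * Sab' a b n (m + 1) + (q - b) * Sab' a b n m
        = V b n (m + 1) * V a n m).
Proof.
move=> S Sab' V; rewrite /S /Sab' /V /Sij /Sab /Va {S Sab' V}.
have inj X : X *m K + K *m X = 0 -> X = 0 := anticomm_eq0 Heig.
have /Hinv[unitK _] : 0 \in [:: 0; p; q; a; b] by rewrite mem_head.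
rewrite raddf0 add0r in unitK.
have /Hinv[unitA _] : a \in [:: 0; p; q; a; b] by rewrite !inE eqxx !orbT.
have /Hinv[unitB _] : b \in [:: 0; p; q; a; b] by rewrite !inE eqxx !orbT.
split=> [i j n m | symS n m].
  do ![split].
  - exact: (S_shift_minus inj (Hr1 n m) (HM n m) (HM _ _) (HIM n m) (HIM _ _) unitK).
  - exact: (S_shift_plus inj (Hr1 n m) (HM n m) (HM _ _) (HIM n m) (HIM _ _) unitK).
  - exact: (S_shift_minus inj (Hr2 n m) (HM n m) (HM _ _) (HIM n m) (HIM _ _) unitK).
  - exact: (S_shift_plus inj (Hr2 n m) (HM n m) (HM _ _) (HIM n m) (HIM _ _) unitK).
have symK k l (i j : nat) :
    sc (c *m K ^+ j *m invmx (1%:M + M k l) *m K ^+ i *m r k l)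
    = sc (c *m K ^+ i *m invmx (1%:M + M k l) *m K ^+ j *m r k l).
  by rewrite -!mxpownE; exact: (symS i j k l).
have SabC k l := resolvent_form_sym (symK k l) unitA unitB.
have VC s := resolvent_form_sym1 (symK n m) (s := s).
have Vn := V_shift inj (Hr1 n m) (HM n m) (HM (n + 1) m) (HIM n m) (HIM (n + 1) m).
have Vm := V_shift inj (Hr2 n m) (HM n m) (HM n (m + 1)) (HIM n m) (HIM n (m + 1)).
do ![split].
- exact: SabC.
- by rewrite VC.
- by rewrite (Vn _ _ unitA unitB (VC _ unitB)).
- by rewrite (Vm _ _ unitA unitB (VC _ unitB)).
- by rewrite (SabC (n + 1) m) (SabC n m) (Vn _ _ unitB unitA (VC _ unitA)).
- by rewrite (SabC n (m + 1)) (SabC n m) (Vm _ _ unitB unitA (VC _ unitA)).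
Qed.
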